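(* Let $G$ be a finite simple connected nonbipartite graph with edge ideal $I(G)\subseteq S=K[x_1,\ldots,x_n]$. Then $$\mathrm{dstab}(I(G))\le\min\{d_H : H \text{ is a spanning unicyclic nonbipartite subgraph of } G\}.$$
   Context: $K$ is a field and the vertices of $G$ are the variables $x_1,\ldots,x_n$; $I(G)$ is generated by the monomials $x_ix_j$ with $\{x_i,x_j\}\in E(G)$. For an ideal $I\subseteq S$, $\mathrm{dstab}(I)=\min\{t\ge0:\mathrm{depth}(I^t)=\mathrm{depth}(I^{t+i})\text{ for all }i\ge0\}$. A spanning subgraph of $G$ is a connected subgraph with the same vertex set as $G$; a spanning unicyclic nonbipartite subgraph is a spanning subgraph containing exactly one cycle, which has odd length. For such $H$ with unique cycle of length $2k+1$, let $E^*(H)$ be the set of edges of $H$ not on that cycle that are not leaves of $H$ (an edge $y_1y_2$ is a leaf of $H$ if $y_1$ or $y_2$ is adjacent to exactly one vertex in $H$), and set $d_H=|E^*(H)|+k+1$. *)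

From mathcomp Require Import all_boot all_algebra.
From mathcomp Require Import mpoly.
Set Implicit Arguments. Unset Strict Implicit. Unset Printing Implicit Defensive.
Import GRing.Theory.
Local Open Scope ring_scope.

Definition in_ideal (R : comNzRingType) (gs : seq R) (p : R) : Prop :=
  exists cs : seq R, p = \sum_(i < size gs) cs`_i * gs`_i.

Fixpoint pow_gens (R : comNzRingType) (gs : seq R) (t : nat) : seq R :=
  match t with
  | 0 => [:: 1]
  | t'.+1 => [seq a * b | a <- gs, b <- pow_gens gs t']
  end.

Definition in_smod (R : comNzRingType) (fs : seq R) (M : R -> Prop) (p : R) : Prop :=
  exists ms : seq R, (forall j, (j < size fs)%N -> M ms`_j) /\
    p = \sum_(j < size fs) fs`_j * ms`_j.

(* fs is an M-regular sequence contained in the ideal m: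
   each f_(k+1) is a nonzerodivisor on M/(f_1..f_k)M, and M/(fs)M <> 0 *)
Definition is_regseq (R : comNzRingType) (m M : R -> Prop) (fs : seq R) : Prop :=
  [/\ forall j, (j < size fs)%N -> m fs`_j,
      forall k, (k < size fs)%N -> forall g, M g ->
        in_smod (take k fs) M (fs`_k * g) -> in_smod (take k fs) M g
    & exists g, M g /\ ~ in_smod fs M g].

Definition has_regseq (R : comNzRingType) (m M : R -> Prop) (r : nat) : Prop :=
  exists fs : seq R, size fs = r /\ is_regseq m M fs.

Definition max_ideal (K : fieldType) (n : nat) : {mpoly K[n]} -> Prop :=
  in_ideal [seq 'X_i | i <- enum 'I_n].

(* depth(M) = depth(N), for S-modules M, N (given as ideals, i.e. predicates on S):
   depth is the (common) length of maximal M-regular sequences in (x_1..x_n),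
   so equality of depths is equality of the sets of lengths of regular sequences. *)
Definition same_depth (K : fieldType) (n : nat) (M N : {mpoly K[n]} -> Prop) : Prop :=
  forall r, has_regseq (@max_ideal K n) M r <-> has_regseq (@max_ideal K n) N r.

Definition ideal_pow (K : fieldType) (n : nat) (gs : seq {mpoly K[n]}) (t : nat) :
  {mpoly K[n]} -> Prop := in_ideal (pow_gens gs t).

(* dstab(I) <= d, where dstab(I) = min{t : depth(I^t) = depth(I^(t+i)) for all i} *)
Definition dstab_le (K : fieldType) (n : nat) (gs : seq {mpoly K[n]}) (d : nat) : Prop :=
  exists t, (t <= d)%N /\
    forall i, same_depth (ideal_pow gs t) (ideal_pow gs (t + i)).

Definition simple_graph (n : nat) (G : rel 'I_n) : Prop :=
  ssrbool.symmetric G /\ ssrbool.irreflexive G.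

Definition connected_graph (n : nat) (G : rel 'I_n) : Prop :=
  forall x y, connect G x y.

Definition bipartite (n : nat) (G : rel 'I_n) : Prop :=
  exists f : 'I_n -> bool, forall x y, G x y -> f x != f y.

Definition edge_gens (K : fieldType) (n : nat) (G : rel 'I_n) : seq {mpoly K[n]} :=
  [seq 'X_i * 'X_j | i <- enum 'I_n, j <- [seq j <- enum 'I_n | G i j]].

Definition edges (n : nat) (H : rel 'I_n) : {set {set 'I_n}} :=
  [set e : {set 'I_n} | [exists x, exists y, H x y && (e == [set x; y])]].

Definition degree (n : nat) (H : rel 'I_n) (v : 'I_n) : nat := #|[set u | H v u]|.

Definition is_cycle (n : nat) (H : rel 'I_n) (c : seq 'I_n) : Prop :=
  (2 < size c)%N /\ uniq c /\ cycle H c.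

Definition cycle_edges (n : nat) (c : seq 'I_n) : {set {set 'I_n}} :=
  match c with
  | [::] => set0
  | x0 :: _ => [set [set nth x0 c i; nth x0 (rcons (behead c) x0) i] | i : 'I_(size c)]
  end.

(* H is a spanning unicyclic nonbipartite subgraph of G, whose unique cycle is c:
   H is a simple graph on the same vertex set, its edges are edges of G, it is connected,
   c is a cycle of H, every cycle of H has the same edges as c (exactly one cycle),
   and c has odd length *)
Definition spanning_unicyclic_nonbip (n : nat) (G H : rel 'I_n) (c : seq 'I_n) : Prop :=
  [/\ simple_graph H, subrel H G, connected_graph H,
      is_cycle H c &
    (
      (forall c', is_cycle H c' -> cycle_edges c' = cycle_edges c)
    /\ odd (size c))].

Definition Estar (n : nat) (H : rel 'I_n) (c : seq 'I_n) : {set {set 'I_n}} :=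
  [set e in edges H | (e \notin cycle_edges c) && [forall v in e, degree H v != 1%N]].

(* d_H = |E*(H)| + k + 1, where the cycle has length 2k+1 *)
Definition d_H (n : nat) (H : rel 'I_n) (c : seq 'I_n) : nat :=
  (#|Estar H c| + (size c).-1./2 + 1)%N.

(* For t >= d_H the maximal ideal is associated to I(G)^t, with socle element
   w = x_C * prod_(e in E*(H)) x_e * e0^(t - d_H), where x_C is the product of the
   vertices of the odd cycle C of length 2k+1 and e0 is any edge.  Substituting one
   variable X for all x_i sends I^t into (X^(2t)) but w to X^(2t-1), so w is not in I^t.
   On the other hand x_j w lies in I^t for every vertex j: for a shortest path P from j
   to C, the monomial x_j x_C prod_(e in P) x_e is the product of the vertices of the
   closed walk from j along P, once around C and back along P, which has 2(|P| + k + 1)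
   vertices and is therefore a product of |P| + k + 1 edges; every edge of P lies in
   E*(H), except a leaf edge at j, which is then split off as x_j x_y.  A socle element
   forbids I^t-regular sequences of length 2 while x_(c0) is I^t-regular, so all the
   I^t with t >= d_H have the same depth. *)

From mathcomp Require Import all_boot all_algebra.
From mathcomp Require Import mpoly.
From mathcomp Require Import ring zify.
Set Implicit Arguments. Unset Strict Implicit. Unset Printing Implicit Defensive.
Import GRing.Theory.
Local Open Scope ring_scope.

Section IdealPowers.
Variable R : comNzRingType.
Implicit Types (gs hs : seq R) (p q w : R).

Lemma in_ideal0 gs : in_ideal gs 0.
Proof. by exists [::]; rewrite big1 // => i _; rewrite nth_nil mul0r. Qed.

Lemma in_idealD gs p q : in_ideal gs p -> in_ideal gs q -> in_ideal gs (p + q).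
Proof.
move=> [cp ->] [cq ->]; exists (mkseq (fun i => cp`_i + cq`_i) (size gs)).
by rewrite -big_split; apply: eq_bigr => i _; rewrite nth_mkseq // mulrDl.
Qed.

Lemma in_idealMl gs r p : in_ideal gs p -> in_ideal gs (r * p).
Proof.
move=> [cp ->]; exists (mkseq (fun i => r * cp`_i) (size gs)).
by rewrite mulr_sumr; apply: eq_bigr => i _; rewrite nth_mkseq // mulrA.
Qed.

Lemma mem_in_ideal gs g : g \in gs -> in_ideal gs g.
Proof.
move=> gs_g; exists (mkseq (fun i => (i == index g gs)%:R) (size gs)).
have lt_g : (index g gs < size gs)%N by rewrite index_mem.
rewrite (bigD1 (Ordinal lt_g)) //= nth_mkseq // eqxx mul1r nth_index //.
rewrite big1 ?addr0 // => i neq_i; rewrite nth_mkseq //.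
by rewrite -[index g gs]/(val (Ordinal lt_g)) val_eqE (negbTE neq_i) mul0r.
Qed.

Lemma in_ideal_ind gs (P : R -> Prop) :
  P 0 -> (forall p q, P p -> P q -> P (p + q)) -> (forall r p, P p -> P (r * p)) ->
  (forall g, g \in gs -> P g) -> forall p, in_ideal gs p -> P p.
Proof.
move=> P0 PD PM Pgs p [cp ->].
by elim/big_ind: _ => // i _; apply: PM; apply: Pgs; apply: mem_nth.
Qed.

Lemma in_ideal_mulr gs hs w :
  (forall g, g \in gs -> in_ideal hs (g * w)) ->
  forall p, in_ideal gs p -> in_ideal hs (p * w).
Proof.
move=> gs_w; apply: in_ideal_ind => [|p q|r p|//].
- by rewrite mul0r; apply: in_ideal0.
- by rewrite mulrDl; apply: in_idealD.
- by rewrite -mulrA; apply: in_idealMl.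
Qed.

Lemma mem_pow_gensM gs s t a b :
  a \in pow_gens gs s -> b \in pow_gens gs t -> a * b \in pow_gens gs (s + t).
Proof.
elim: s a => [|s IHs] a /=; first by rewrite inE => /eqP ->; rewrite mul1r.
case/allpairsP => -[x y] /= [gs_x pow_y ->] pow_b.
by rewrite -mulrA; apply/allpairsP; exists (x, y * b); split => //; apply: IHs.
Qed.

Lemma in_ideal_powM gs s t p q :
  in_ideal (pow_gens gs s) p -> in_ideal (pow_gens gs t) q ->
  in_ideal (pow_gens gs (s + t)) (p * q).
Proof.
move=> pow_p pow_q; apply: in_ideal_mulr pow_p => a pow_a.
rewrite mulrC; apply: in_ideal_mulr pow_q => b pow_b.
by apply: mem_in_ideal; rewrite mulrC; apply: mem_pow_gensM.
Qed.

Lemma in_ideal_pow0 gs p : in_ideal (pow_gens gs 0) p.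
Proof. by rewrite -[p]mulr1; apply/in_idealMl/mem_in_ideal; rewrite inE. Qed.

Lemma in_ideal_pow1 gs g : g \in gs -> in_ideal (pow_gens gs 1) g.
Proof.
by move=> gs_g; apply: mem_in_ideal; apply/allpairsP; exists (g, 1); rewrite mulr1 inE.
Qed.

Lemma in_ideal_pow_prod gs (I : eqType) (s : seq I) (F : I -> R) :
  (forall i, i \in s -> in_ideal (pow_gens gs 1) (F i)) ->
  in_ideal (pow_gens gs (size s)) (\prod_(i <- s) F i).
Proof.
elim: s => [|i s IHs] sF; first by rewrite big_nil; apply: in_ideal_pow0.
rewrite big_cons -[size _]add1n; apply: in_ideal_powM; first by apply: sF; rewrite inE eqxx.
by apply: IHs => j s_j; apply: sF; rewrite inE s_j orbT.
Qed.

Lemma in_ideal_pow_exp gs g m : g \in gs -> in_ideal (pow_gens gs m) (g ^+ m).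
Proof.
move=> gs_g; elim: m => [|m IHm]; first exact: in_ideal_pow0.
by rewrite exprS -add1n; apply: in_ideal_powM => //; apply: in_ideal_pow1.
Qed.
End IdealPowers.

Section RegularSequences.
Variables (R : idomainType) (mx M : R -> Prop).
Hypothesis M0 : M 0.

Lemma in_smod0 fs : in_smod fs M 0.
Proof.
exists (nseq (size fs) 0); split => [j _|]; first by rewrite nth_nseq if_same.
by rewrite big1 // => j _; rewrite nth_nseq if_same mulr0.
Qed.

Lemma in_smod_nil p : in_smod [::] M p <-> p = 0.
Proof.
split => [[ms [_ ->]]|->]; first by rewrite big_ord0.
exact: in_smod0.
Qed.

Lemma in_smod1 f p : in_smod [:: f] M p <-> exists2 m, M m & p = f * m.
Proof.
split => [[ms [Mms ->]]|[m Mm ->]].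
  by exists ms`_0; [apply: Mms | rewrite big_ord1].
by exists [:: m]; split => [[]|]; rewrite ?big_ord1.
Qed.

(* A socle element [w] of [M] rules out regular sequences of length 2: [f2 (f1 w)]
   lies in [f1 M], so regularity of [f2] would put [f1 w] in [f1 M], i.e. [w] in [M]. *)
Lemma regseq_size_le1 w fs :
  ~ M w -> (forall f, mx f -> M (f * w)) -> is_regseq mx M fs -> (size fs <= 1)%N.
Proof.
move=> Mw soc_w [fs_mx fs_reg [g [Mg fs_g]]].
case: fs fs_mx fs_reg fs_g => [|f1 [|f2 fs]] //= fs_mx fs_reg fs_g.
have f1_mx := fs_mx 0%N isT; have f2_mx := fs_mx 1%N isT.
have f1_neq0 : f1 != 0.
  apply/eqP => f1_0; apply: fs_g.
  have /in_smod_nil -> : in_smod [::] M g.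
    by apply: (fs_reg 0%N isT g Mg); apply/in_smod_nil; rewrite /= f1_0 mul0r.
  exact: in_smod0.
have /in_smod1 [m Mm /(mulfI f1_neq0) w_m] : in_smod [:: f1] M (f1 * w).
  apply: (fs_reg 1%N isT _ (soc_w _ f1_mx)); apply/in_smod1.
  by exists (f2 * w); [apply: soc_w | rewrite /= mulrCA].
by case: Mw; rewrite w_m.
Qed.

Lemma has_regseq_le1 w f g :
  ~ M w -> (forall f, mx f -> M (f * w)) ->
  mx f -> f != 0 -> M g -> ~ in_smod [:: f] M g ->
  forall r, has_regseq mx M r <-> (r <= 1)%N.
Proof.
move=> Mw soc_w f_mx f_neq0 Mg fM_g r; split => [[fs [<- fs_reg]]|].
  exact: regseq_size_le1 Mw soc_w fs_reg.
have g_neq0 : g != 0 by apply: contra_notN fM_g => /eqP ->; apply: in_smod0.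
case: r => [|[|]] // _.
  exists [::]; split => //; split => [j|j|] //.
  by exists g; split => //; rewrite in_smod_nil; apply/eqP.
exists [:: f]; split => //; split; [by case | | by exists g].
case=> // _ h _; rewrite /= !in_smod_nil => /eqP.
by rewrite mulf_eq0 (negbTE f_neq0) => /eqP.
Qed.

End RegularSequences.

Section Walks.
Variable n : nat.
Implicit Types (x y v : 'I_n) (s : seq 'I_n).

Fixpoint walk_edges x s : seq {set 'I_n} :=
  if s is y :: s' then [set x; y] :: walk_edges y s' else [::].

Lemma size_walk_edges x s : size (walk_edges x s) = size s.
Proof. by elim: s x => //= y s IHs x; rewrite IHs. Qed.

Lemma mem_walk_edges x s e v : e \in walk_edges x s -> v \in e -> v \in x :: s.
Proof.
elim: s x => //= y s IHs x; rewrite inE => /predU1P [-> | /IHs e_v /e_v ys_v].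
  by rewrite !inE => /orP [] ->; rewrite ?orbT.
by rewrite inE ys_v orbT.
Qed.

Lemma uniq_walk_edges x s : uniq (x :: s) -> uniq (walk_edges x s).
Proof.
elim: s x => //= y s IHs x /andP [x_ys /[dup] ys_uniq /IHs ->]; rewrite andbT.
apply: contra x_ys => /mem_walk_edges /(_ (set21 x y)).
by rewrite !inE => /predU1P [x_y|->]; rewrite ?orbT // x_y eqxx.
Qed.

Lemma edges_pair (G : rel 'I_n) x y : G x y -> [set x; y] \in edges G.
Proof.
by move=> Gxy; rewrite inE; apply/existsP; exists x; apply/existsP; exists y; rewrite Gxy /=.
Qed.

Lemma edgesP (G : rel 'I_n) e : e \in edges G -> exists x y, G x y /\ e = [set x; y].
Proof. by rewrite inE => /existsP [x /existsP [y /andP [Gxy /eqP ->]]]; exists x, y. Qed.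

Lemma edges_sub (G H : rel 'I_n) : subrel H G -> {subset edges H <= edges G}.
Proof. by move=> HG e /edgesP [x [y [/HG Gxy ->]]]; apply: edges_pair. Qed.

Variable H : rel 'I_n.

Lemma degree_neq1 v a b : a != b -> H v a -> H v b -> degree H v != 1%N.
Proof.
move=> a_b Hva Hvb; apply/eqP => deg_v.
have : (#|[set a; b]| <= degree H v)%N.
  by apply: subset_leq_card; apply/subsetP => u; rewrite !inE => /orP [] /eqP ->.
by rewrite deg_v cards2 a_b.
Qed.

Section Cycle.
Variable c : seq 'I_n.
Hypotheses (Hsym : ssrbool.symmetric H) (Hc : is_cycle H c).

Lemma cycle_degree_neq1 v : v \in c -> degree H v != 1%N.
Proof.
case: Hc => c_gt2 [c_uniq c_cycle] /rot_to [i p c_rot].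
have : size p = (size c).-1 by rewrite -(size_rot i c) c_rot.
have : cycle H (v :: p) by rewrite -c_rot rot_cycle.
have : uniq (v :: p) by rewrite -c_rot rot_uniq.
case: p {c_rot} => [|a p]; first by move=> _ _ /= p0; lia.
case/lastP: p => [|p b]; first by move=> _ _ /= p1; lia.
move=> /and3P [_ a_pb _] /= /andP [Hva]; rewrite rcons_path last_rcons => /andP [_ Hbv] _.
apply: (@degree_neq1 v a b) => //; last by rewrite Hsym.
by apply: contraNneq a_pb => ->; rewrite mem_rcons mem_head.
Qed.

Lemma mem_cycle_edges e v : e \in cycle_edges c -> v \in e -> v \in c.
Proof.
case: c => [|x0 s] /=; first by rewrite inE.
case/imsetP => i _ ->.
rewrite inE => /orP [] /set1P ->; first exact: mem_nth.
by rewrite -mem_rcons; apply: mem_nth; rewrite size_rcons.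
Qed.

Lemma degree_next_neq1 x y s :
  path H x (y :: s) -> uniq (x :: y :: s) -> last x (y :: s) \in c -> degree H y != 1%N.
Proof.
case: s => [_ _|z s]; first exact: cycle_degree_neq1.
move=> /and3P [Hxy Hyz _] /andP [x_yzs _] _.
apply: (@degree_neq1 y x z) => //; last by rewrite Hsym.
by apply: contraNneq x_yzs => ->; rewrite !inE eqxx orbT.
Qed.

Lemma walk_edges_sub_Estar x s :
  path H x s -> uniq (x :: s) -> last x s \in c -> {in belast x s, forall v, v \notin c} ->
  degree H x != 1%N -> {subset walk_edges x s <= Estar H c}.
Proof.
elim: s x => //= y s IHs x xs_path xs_uniq xs_last xs_off deg_x e.
have deg_y := degree_next_neq1 xs_path xs_uniq xs_last.
move: xs_path xs_uniq => /= /andP [Hxy ys_path] /andP [_ ys_uniq].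
rewrite inE => /predU1P [-> | ]; last first.
  by apply: IHs => // v ys_v; apply: xs_off; rewrite inE ys_v orbT.
rewrite inE edges_pair //=; apply/andP; split.
  by move: (xs_off x (mem_head _ _)); apply: contra => /mem_cycle_edges; apply; apply: set21.
by apply/forall_inP => v; rewrite !inE => /orP [] /eqP ->.
Qed.

Hypothesis Hconn : connected_graph H.

Lemma exists_path_to_cycle j : j \notin c ->
  exists q, [/\ path H j q, uniq (j :: q), last j q \in c
                & {in belast j q, forall v, v \notin c}].
Proof.
have [c_gt2 _] := Hc; case E: c c_gt2 => [//|c0 cs] _ j_c.
have /connectP [p p_path p_last] := Hconn j c0.
case: (shortenP p_path) p_last => {p_path}p p_path p_uniq _ p_last.
have : has (fun v => v \in c0 :: cs) (j :: p).
  by apply/hasP; exists (last j p); [apply: mem_last | rewrite -p_last mem_head].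
rewrite /= (negbTE j_c) /= => p_c.
case: (split_find p_c) p_path p_uniq => u q r u_c q_c.
rewrite cat_path -cat_cons cat_uniq => /andP [q_path _] /andP [q_uniq _].
exists (rcons q u); split => //; first by rewrite last_rcons.
rewrite belast_rcons => v; rewrite inE => /predU1P [-> // | q_v].
by apply: contra q_c => v_c; apply/hasP; exists v.
Qed.

End Cycle.
End Walks.

Section EdgeIdealPowers.
Variables (K : fieldType) (n : nat).
Local Notation X i := ('X_i : {mpoly K[n]}).

Definition xprod (s : seq 'I_n) : {mpoly K[n]} := \prod_(v <- s) 'X_v.

Definition emon (e : {set 'I_n}) : {mpoly K[n]} := \prod_(v in e) 'X_v.

Lemma xprod_rot i s : xprod (rot i s) = xprod s.
Proof. by apply: perm_big; rewrite perm_rot. Qed.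

Lemma emon_pair x y : x != y -> emon [set x; y] = X x * X y.
Proof. by move=> x_y; rewrite /emon big_setU1 ?in_set1 // big_set1. Qed.

Variable G : rel 'I_n.
Hypotheses (Gsym : ssrbool.symmetric G) (Girr : irreflexive G).
Local Notation I := (@edge_gens K n G).

Lemma mem_edge_gens x y : G x y -> X x * X y \in I.
Proof.
move=> Gxy; apply/allpairsPdep; exists x, y.
by rewrite mem_enum mem_filter Gxy mem_enum.
Qed.

Lemma edge_in_pow1 x y : G x y -> ideal_pow I 1 (X x * X y).
Proof. by move/mem_edge_gens; apply: in_ideal_pow1. Qed.

Lemma emon_edge x y : G x y -> emon [set x; y] = X x * X y.
Proof. by move=> Gxy; apply: emon_pair; apply: contraTneq Gxy => ->; rewrite Girr. Qed.

Lemma edge_set_in_pow (A : {set {set 'I_n}}) :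
  {subset A <= edges G} -> ideal_pow I #|A| (\prod_(e in A) emon e).
Proof.
move=> A_G; rewrite -big_enum cardE; apply: in_ideal_pow_prod => e.
rewrite mem_enum => /A_G /edgesP [x [y [Gxy ->]]].
by rewrite emon_edge //; apply: edge_in_pow1.
Qed.

Lemma prod_walk_edges x s :
  path G x s -> \prod_(e <- walk_edges x s) emon e = xprod (belast x s) * xprod s.
Proof.
elim: s x => [|y s IHs] x /=; first by rewrite /xprod !big_nil mulr1.
case/andP => Gxy /IHs IH; rewrite big_cons IH /xprod !big_cons emon_edge //.
by rewrite mulrACA.
Qed.

Lemma odd_walk_in_pow x s :
  path G x s -> odd (size s) -> ideal_pow I (size s).+1./2 (xprod (x :: s)).
Proof.
move=> xs_path s_odd; have := odd_double_half (size s); rewrite s_odd add1n => {s_odd} s_size.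
rewrite -s_size -doubleS doubleK; move: (size s)./2 s_size => l.
elim: l x s xs_path => [|l IHl] x [|y [|z s]] //=.
  by rewrite andbT /xprod !big_cons big_nil mulr1 => /edge_in_pow1.
case/and3P => Gxy Gyz zs_path [s_size]; rewrite /xprod 2!big_cons mulrA -add1n.
by apply: in_ideal_powM; [apply: edge_in_pow1 | apply: IHl].
Qed.

(* The walk from [j] along [q], once around [c] and back along [q] to [j] has an even
   number of vertices. *)
Lemma cycle_walk_in_pow c k j q :
  cycle G c -> size c = k.*2.+1 -> path G j q -> last j q \in c ->
  ideal_pow I (size q + k + 1) (X j * xprod c * \prod_(e <- walk_edges j q) emon e).
Proof.
set u := last j q => c_cycle c_size jq_path /rot_to [i cs c_rot].
have cs_size : size cs = k.*2 by move: c_size; rewrite -(size_rot i) c_rot => -[].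
have us_path : path G u (rcons cs u).
  by rewrite -[path _ _ _]/(cycle G (u :: cs)) -c_rot rot_cycle.
set W := q ++ rcons cs u ++ rev (belast j q).
have W_path : path G j W.
  rewrite !cat_path jq_path us_path last_rcons rev_path /=.
  by apply: sub_path jq_path => a b; rewrite Gsym.
have W_size : size W = (size q + k).*2.+1.
  by rewrite !size_cat size_rcons size_rev size_belast cs_size; lia.
have := odd_walk_in_pow W_path; rewrite W_size oddS odd_double -doubleS doubleK => /(_ isT).
congr in_ideal; first by congr pow_gens; lia.
rewrite prod_walk_edges // -(xprod_rot i c) c_rot /xprod.
by rewrite !big_cons !big_cat big_rcons big_rev /=; ring.
Qed.

Lemma leaf_walk_in_pow c k j y q :
  cycle G c -> size c = k.*2.+1 -> G j y -> path G y q -> last y q \in c ->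
  ideal_pow I (size q + k + 1) (X j * xprod c * \prod_(e <- walk_edges y q) emon e).
Proof.
move=> c_cycle c_size Gjy.
case: q => [_ /= /rot_to [i cs c_rot] | z q /= /andP [Gyz zq_path] zq_last].
  have cs_size : size cs = k.*2 by move: c_size; rewrite -(size_rot i) c_rot => -[].
  have ycs_path : path G j (y :: cs).
    move: c_cycle; rewrite -(rot_cycle i) c_rot /= rcons_path => /andP [ycs_path _].
    by rewrite /= Gjy.
  have := odd_walk_in_pow ycs_path.
  rewrite [size _]/= cs_size oddS odd_double -doubleS doubleK => /(_ isT).
  by rewrite big_nil mulr1 -(xprod_rot i c) c_rot /xprod big_cons addn1.
rewrite big_cons emon_edge // [size _]/= !addSn -add1n.
set E := \prod_(e <- _) _.
have -> : X j * xprod c * (X y * X z * E) = X j * X y * (X z * xprod c * E) by ring.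
by apply: in_ideal_powM; [apply: edge_in_pow1 | apply: cycle_walk_in_pow].
Qed.

End EdgeIdealPowers.

Section Collapse.
Variables (K : fieldType) (n : nat).

Definition collapse : {rmorphism {mpoly K[n]} -> {poly K}} := mmap (@polyC K) (fun _ => 'X).

Lemma collapseX i : collapse 'X_i = 'X.
Proof. by rewrite /collapse /= mmapX mmap1U. Qed.

Lemma collapse_xprod s : collapse (xprod K s) = 'X^(size s).
Proof.
elim: s => [|v s IHs]; first by rewrite /xprod big_nil rmorph1.
by rewrite /xprod big_cons rmorphM collapseX -/(xprod K s) IHs exprS.
Qed.

Lemma collapse_pow_gens (gs : seq {mpoly K[n]}) t p :
  (forall g, g \in gs -> collapse g = 'X^2) ->
  in_ideal (pow_gens gs t) p -> ('X^(t.*2) %| collapse p)%R.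
Proof.
move=> gs_quad; have pow_gens_t g : g \in pow_gens gs t -> collapse g = 'X^(t.*2).
  elim: t g => [|t IHt] g /=; first by rewrite inE => /eqP ->; rewrite rmorph1.
  case/allpairsP => -[a b] /= [/gs_quad gs_a /IHt pow_b ->].
  by rewrite rmorphM gs_a pow_b -exprD doubleS add2n.
move: p; apply: in_ideal_ind => [|a b|r a|g /pow_gens_t ->].
- by rewrite rmorph0 dvdp0.
- by rewrite rmorphD; apply: dvdp_add.
- by rewrite rmorphM; apply: dvdp_mull.
- exact: dvdpp.
Qed.

Lemma notin_pow_of_collapse (gs : seq {mpoly K[n]}) t p :
  (forall g, g \in gs -> collapse g = 'X^2) -> (0 < t)%N ->
  collapse p = 'X^(t.*2.-1) -> ~ in_ideal (pow_gens gs t) p.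
Proof.
move=> gs_quad t_gt0 p_deg /(collapse_pow_gens gs_quad).
by rewrite p_deg dvdp_Pexp2l ?size_polyX //; lia.
Qed.

Lemma collapse_edge_gens (G : rel 'I_n) g : g \in @edge_gens K n G -> collapse g = 'X^2.
Proof. by case/allpairsPdep => i [j [_ _ ->]]; rewrite rmorphM !collapseX expr2. Qed.
End Collapse.
Arguments collapse {K n}.

Section Socle.
Variables (K : fieldType) (n : nat) (G H : rel 'I_n) (c : seq 'I_n).
Hypotheses (Gsym : ssrbool.symmetric G) (Girr : irreflexive G) (Hsym : ssrbool.symmetric H).
Hypotheses (HG : subrel H G) (Hconn : connected_graph H) (Hc : is_cycle H c).
Hypothesis c_odd : odd (size c).
Local Notation X i := ('X_i : {mpoly K[n]}).
Local Notation I := (@edge_gens K n G).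
Local Notation k := (size c)./2.

Lemma size_cycle : size c = k.*2.+1.
Proof. by rewrite -[LHS]odd_double_half c_odd add1n. Qed.

Lemma d_HE : d_H H c = (#|Estar H c| + k + 1)%N.
Proof. by rewrite /d_H {1}size_cycle /= doubleK. Qed.

Lemma Estar_sub_edges : {subset Estar H c <= edges G}.
Proof. by move=> e; rewrite inE => /andP [/(edges_sub HG)]. Qed.

Definition socle_witness : {mpoly K[n]} := xprod K c * \prod_(e in Estar H c) emon K e.

Lemma mulX_socle_in_pow_of_walk j s :
  uniq s -> {subset s <= Estar H c} ->
  ideal_pow I (size s + k + 1) (X j * xprod K c * \prod_(e <- s) emon K e) ->
  ideal_pow I (d_H H c) (X j * socle_witness).
Proof.
move=> s_uniq s_Estar walk_pow; set S := [set e in s].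
have S_sub : S \subset Estar H c by apply/subsetP => e; rewrite inE; apply: s_Estar.
rewrite d_HE -(cardsID S) (setIidPr S_sub) cardsE (card_uniqP s_uniq).
rewrite /socle_witness (big_setID S) (setIidPr S_sub) /=.
have -> : \prod_(e in S) emon K e = \prod_(e <- s) emon K e.
  by rewrite big_uniq //; apply: eq_bigl => e; rewrite inE.
rewrite !mulrA.
have -> : (size s + #|Estar H c :\: S| + k + 1 = size s + k + 1 + #|Estar H c :\: S|)%N by lia.
apply: in_ideal_powM walk_pow (edge_set_in_pow K Girr _).
by move=> e /setDP [/Estar_sub_edges].
Qed.

Lemma mulX_socle_in_pow j : ideal_pow I (d_H H c) (X j * socle_witness).
Proof.
have c_cycle : cycle G c by case: Hc => _ [_ /(sub_cycle HG)].
have [j_c|j_c] := boolP (j \in c).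
  apply: (@mulX_socle_in_pow_of_walk j [::]) => //.
  by have := cycle_walk_in_pow K Gsym Girr c_cycle size_cycle (erefl : path G j [::]) j_c.
have [q [jq_path jq_uniq jq_last jq_off]] := exists_path_to_cycle Hc Hconn j_c.
have [deg_j|deg_j] := eqVneq (degree H j) 1%N; last first.
  apply: (@mulX_socle_in_pow_of_walk j (walk_edges j q)); first exact: uniq_walk_edges.
    exact: walk_edges_sub_Estar.
  rewrite size_walk_edges; apply: (cycle_walk_in_pow K Gsym Girr c_cycle size_cycle) => //.
  exact (sub_path HG jq_path).
(* [j] is a leaf: its edge is not in E*(H), and is absorbed by [x_j] instead. *)
case: q jq_path jq_uniq jq_last jq_off => [_ _ /= j_c' | y q jq_path jq_uniq jq_last jq_off].
  by rewrite j_c' in j_c.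
have /andP [Hjy yq_path] := jq_path; have /andP [_ yq_uniq] := jq_uniq.
apply: (@mulX_socle_in_pow_of_walk j (walk_edges y q)); first exact: uniq_walk_edges.
  have deg_y := degree_next_neq1 Hsym Hc jq_path jq_uniq jq_last.
  apply: (walk_edges_sub_Estar Hsym Hc yq_path yq_uniq jq_last _ deg_y).
  by move=> v yq_v; apply: jq_off; rewrite /= inE yq_v orbT.
rewrite size_walk_edges.
apply: (leaf_walk_in_pow K Gsym Girr c_cycle size_cycle (HG Hjy)) => //.
exact (sub_path HG yq_path).
Qed.

Lemma collapse_socle_witness : collapse socle_witness = 'X^((d_H H c).*2.-1).
Proof.
rewrite rmorphM collapse_xprod rmorph_prod (eq_bigr (fun=> 'X^2)) => [|e]; last first.
  case/Estar_sub_edges/edgesP => x [y [Gxy ->]].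
  by rewrite (emon_edge K Girr Gxy) rmorphM !collapseX expr2.
rewrite prodr_const -exprM -exprD d_HE size_cycle; congr 'X^_.
by rewrite -!muln2; lia.
Qed.

Lemma has_regseq_edge_ideal_pow i r :
  has_regseq (@max_ideal K n) (ideal_pow I (d_H H c + i)) r <-> (r <= 1)%N.
Proof.
have [c_gt2 [c_uniq c_cycle]] := Hc.
have [c0 [c1 [c2 [cs c_def]]]] : exists c0 c1 c2 cs, c = [:: c0, c1, c2 & cs].
  by case: (c) c_gt2 => [|c0 [|c1 [|c2 cs]]] //; exists c0, c1, c2, cs.
rewrite c_def in c_uniq c_cycle; case/and3P: c_cycle => _ Hc12 _.
have c0_c1 : c0 != c1 by move: c_uniq; rewrite /= !inE; case: eqP.
have c0_c2 : c0 != c2 by move: c_uniq; rewrite /= !inE; case: (c0 =P c2); rewrite ?orbT.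
set e := X c1 * X c2; have I_e : e \in I by apply/mem_edge_gens/HG.
apply: (@has_regseq_le1 _ _ _ (in_ideal0 _) (socle_witness * e ^+ i) (X c0)
  (e ^+ (d_H H c + i))).
- apply: (notin_pow_of_collapse (@collapse_edge_gens K n G)); first by rewrite d_HE; lia.
  rewrite rmorphM collapse_socle_witness rmorphXn rmorphM !collapseX -expr2 -exprM -exprD.
  by congr 'X^_; rewrite d_HE -!muln2; lia.
- move=> f; apply: in_ideal_mulr => _ /mapP [v _ ->]; rewrite mulrA.
  exact: in_ideal_powM (mulX_socle_in_pow v) (in_ideal_pow_exp _ I_e).
- by apply/mem_in_ideal/map_f; rewrite mem_enum.
- by apply/eqP => /(congr1 collapse)/eqP; rewrite collapseX rmorph0 polyX_eq0.
- exact: in_ideal_pow_exp.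
case/in_smod1 => m _ /(congr1 (meval (fun v => (v != c0)%:R))).
rewrite mevalM rmorphXn /e rmorphM /= !mevalXU eqxx mul0r eq_sym c0_c1 eq_sym c0_c2.
by rewrite mulr1 expr1n => /eqP; rewrite oner_eq0.
Qed.
End Socle.

Theorem corollary2p8 (K : fieldType) (n : nat) (G : rel 'I_n)
  (HGs : simple_graph G) (HGc : connected_graph G) (HGnb : ~ bipartite G) :
  forall (H : rel 'I_n) (c : seq 'I_n),
    spanning_unicyclic_nonbip G H c ->
    dstab_le (@edge_gens K n G) (d_H H c).
Proof.
move=> H c [[Hsym _] HG Hconn Hc [_ c_odd]]; have [Gsym Girr] := HGs.
exists (d_H H c); split => // i r.
have depth_le1 := has_regseq_edge_ideal_pow K Gsym Girr Hsym HG Hconn Hc c_odd.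
by rewrite depth_le1 -(addn0 (d_H H c)) depth_le1.
Qed.
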